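(* Let $G$ be a proper, Polishable, strongly dense subgroup of $\mathbb{T}^\mathbb{N}$. Then the action of $G$ on $\mathbb{T}^\mathbb{N}$ by (coordinatewise multiplicative) translation, with $G$ carrying its Polish group topology, is turbulent.
   Context: $\mathbb{T}=\{z\in\mathbb{C}:|z|=1\}$, and $\mathbb{T}^\mathbb{N}$ carries the product topology and coordinatewise multiplication. A subgroup $G\le\mathbb{T}^\mathbb{N}$ is Polishable if it is a Borel subset and admits a Polish group topology whose Borel sets are exactly the Borel subsets of $\mathbb{T}^\mathbb{N}$ contained in $G$. $G$ is strongly dense if for every finite sequence $(z_0,\dots,z_n)$ of elements of $\mathbb{T}$ there is $g\in G$ with $g_i=z_i$ for all $i\le n$. For a continuous action of a Polish group $G$ on a Polish space $X$, $U\subseteq X$ open, $V\subseteq G$ a symmetric open neighborhood of the identity, and $x\in U$, the local orbit $\mathcal{O}(x,U,V)$ is the set of $y\in U$ for which there are $g_0,\dots,g_k\in V$ and $x=x_0,\dots,x_{k+1}=y$ all in $U$ with $x_{i+1}=g_i\cdot x_i$ for $i\le k$. The action is turbulent if every orbit is dense, every orbit is meager, and every local orbit $\mathcal{O}(x,U,V)$ has closure with nonempty interior. *)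

From Stdlib Require Import Reals Lra Psatz.
Open Scope R_scope.

Definition Tpt : Type := { p : R * R | fst p * fst p + snd p * snd p = 1 }.

Lemma tmul_ok (z w : Tpt) :
  let a := fst (proj1_sig z) in let b := snd (proj1_sig z) in
  let c := fst (proj1_sig w) in let d := snd (proj1_sig w) in
  (a * c - b * d) * (a * c - b * d) + (a * d + b * c) * (a * d + b * c) = 1.
Proof.
  destruct z as [[a b] Hz]; destruct w as [[c d] Hw]; simpl in *.
  replace ((a * c - b * d) * (a * c - b * d) + (a * d + b * c) * (a * d + b * c))
    with ((a * a + b * b) * (c * c + d * d)) by ring.
  rewrite Hz, Hw; ring.
Qed.

(* complex multiplication restricted to T *)
Definition tmul (z w : Tpt) : Tpt :=
  exist _ (fst (proj1_sig z) * fst (proj1_sig w) - snd (proj1_sig z) * snd (proj1_sig w),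
           fst (proj1_sig z) * snd (proj1_sig w) + snd (proj1_sig z) * fst (proj1_sig w))
        (tmul_ok z w).

Lemma tinv_ok (z : Tpt) :
  fst (proj1_sig z) * fst (proj1_sig z) + (- snd (proj1_sig z)) * (- snd (proj1_sig z)) = 1.
Proof. destruct z as [[a b] Hz]; simpl in *; lra. Qed.

Definition tinv (z : Tpt) : Tpt :=
  exist _ (fst (proj1_sig z), - snd (proj1_sig z)) (tinv_ok z).

Lemma tone_ok : fst (1, 0) * fst (1, 0) + snd (1, 0) * snd (1, 0) = 1.
Proof. simpl; lra. Qed.

Definition tone : Tpt := exist _ (1, 0) tone_ok.

Definition tdist (z w : Tpt) : R :=
  sqrt ((fst (proj1_sig z) - fst (proj1_sig w)) ^ 2 + (snd (proj1_sig z) - snd (proj1_sig w)) ^ 2).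

Definition TN : Type := nat -> Tpt.
Definition TNmul (x y : TN) : TN := fun i => tmul (x i) (y i).
Definition TNinv (x : TN) : TN := fun i => tinv (x i).
Definition TNone : TN := fun _ => tone.

Definition is_topology {X : Type} (O : (X -> Prop) -> Prop) : Prop :=
  (forall U V : X -> Prop, (forall x, U x <-> V x) -> O U -> O V) /\
  O (fun _ => True) /\
  (forall U V, O U -> O V -> O (fun x => U x /\ V x)) /\
  (forall F : (X -> Prop) -> Prop, (forall U, F U -> O U) ->
     O (fun x => exists U, F U /\ U x)).

(* the product topology on T^N: U is open iff around each of its points it
   contains a basic cylinder (finitely many coordinates constrained to
   Euclidean balls of a common radius) *)
Definition TN_open (U : TN -> Prop) : Prop :=
  forall x, U x -> exists (n : nat) (eps : R), 0 < eps /\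
    forall y, (forall i, (i <= n)%nat -> tdist (x i) (y i) < eps) -> U y.

Definition metric {X : Type} (d : X -> X -> R) : Prop :=
  (forall x y, 0 <= d x y) /\ (forall x y, d x y = 0 <-> x = y) /\
  (forall x y, d x y = d y x) /\ (forall x y z, d x z <= d x y + d y z).

Definition metric_open {X : Type} (d : X -> X -> R) (U : X -> Prop) : Prop :=
  forall x, U x -> exists eps, 0 < eps /\ forall y, d x y < eps -> U y.

Definition complete_metric {X : Type} (d : X -> X -> R) : Prop :=
  forall s : nat -> X,
    (forall eps, 0 < eps -> exists N, forall m n, (N <= m)%nat -> (N <= n)%nat -> d (s m) (s n) < eps) ->
    exists l, forall eps, 0 < eps -> exists N, forall n, (N <= n)%nat -> d (s n) l < eps.

Definition separable {X : Type} (O : (X -> Prop) -> Prop) : Prop :=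
  (forall x : X, False) \/
  exists s : nat -> X, forall U, O U -> (exists x, U x) -> exists n, U (s n).

Definition polish {X : Type} (O : (X -> Prop) -> Prop) : Prop :=
  is_topology O /\ separable O /\
  exists d : X -> X -> R, metric d /\ complete_metric d /\
    (forall U, O U <-> metric_open d U).

Definition sigma_algebra {X : Type} (S : (X -> Prop) -> Prop) : Prop :=
  (forall A B : X -> Prop, (forall x, A x <-> B x) -> S A -> S B) /\
  S (fun _ => True) /\
  (forall A, S A -> S (fun x => ~ A x)) /\
  (forall A : nat -> (X -> Prop), (forall n, S (A n)) -> S (fun x => exists n, A n x)).

Definition borel {X : Type} (O : (X -> Prop) -> Prop) (A : X -> Prop) : Prop :=
  forall S, sigma_algebra S -> (forall U, O U -> S U) -> S A.

Definition interior {X : Type} (O : (X -> Prop) -> Prop) (A : X -> Prop) : X -> Prop :=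
  fun x => exists U, O U /\ U x /\ forall y, U y -> A y.

Definition closure {X : Type} (O : (X -> Prop) -> Prop) (A : X -> Prop) : X -> Prop :=
  fun x => forall U, O U -> U x -> exists y, U y /\ A y.

Definition dense {X : Type} (O : (X -> Prop) -> Prop) (A : X -> Prop) : Prop :=
  forall x, closure O A x.

Definition nowhere_dense {X : Type} (O : (X -> Prop) -> Prop) (A : X -> Prop) : Prop :=
  forall x, ~ interior O (closure O A) x.

Definition meager {X : Type} (O : (X -> Prop) -> Prop) (A : X -> Prop) : Prop :=
  exists N : nat -> (X -> Prop), (forall n, nowhere_dense O (N n)) /\
    forall x, A x -> exists n, N n x.

Definition subgroup (G : TN -> Prop) : Prop :=
  G TNone /\ (forall x y, G x -> G y -> G (TNmul x y)) /\ (forall x, G x -> G (TNinv x)).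

Definition proper_subgroup (G : TN -> Prop) : Prop := exists x, ~ G x.

Definition strongly_dense (G : TN -> Prop) : Prop :=
  forall (n : nat) (z : nat -> Tpt), exists g, G g /\ forall i, (i <= n)%nat -> g i = z i.

Definition Gsub (G : TN -> Prop) : Type := { x : TN | G x }.

(* tau is a topological group topology on G: (g,h) |-> g h^{-1} is continuous *)
Definition group_topology (G : TN -> Prop) (tau : (Gsub G -> Prop) -> Prop) : Prop :=
  forall W (g h k : Gsub G), tau W ->
    proj1_sig k = TNmul (proj1_sig g) (TNinv (proj1_sig h)) -> W k ->
    exists U V, tau U /\ tau V /\ U g /\ V h /\
      forall g' h' k' : Gsub G, U g' -> V h' ->
        proj1_sig k' = TNmul (proj1_sig g') (TNinv (proj1_sig h')) -> W k'.

Definition compatible_polish_group_topology (G : TN -> Prop)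
    (tau : (Gsub G -> Prop) -> Prop) : Prop :=
  polish tau /\ group_topology G tau /\
  forall A : Gsub G -> Prop,
    borel tau A <-> borel TN_open (fun x => exists g : Gsub G, proj1_sig g = x /\ A g).

Definition polishable (G : TN -> Prop) : Prop :=
  borel TN_open G /\ exists tau, compatible_polish_group_topology G tau.

Definition act {G : TN -> Prop} (g : Gsub G) (x : TN) : TN := TNmul (proj1_sig g) x.

Definition action_continuous (G : TN -> Prop) (tau : (Gsub G -> Prop) -> Prop) : Prop :=
  forall W g x, TN_open W -> W (act g x) ->
    exists U V, tau U /\ TN_open V /\ U g /\ V x /\
      forall g' x', U g' -> V x' -> W (act g' x').

Definition orbit {G : TN -> Prop} (x : TN) : TN -> Prop :=
  fun y => exists g : Gsub G, y = act g x.

Inductive lchain {G : TN -> Prop} (U : TN -> Prop) (V : Gsub G -> Prop) (x : TN) : TN -> Prop :=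
  | lchain0 : U x -> lchain U V x x
  | lchainS : forall y (g : Gsub G), lchain U V x y -> V g -> U (act g y) ->
              lchain U V x (act g y).

(* local orbit O(x,U,V): reachable in k+1 >= 1 steps *)
Definition local_orbit {G : TN -> Prop} (x : TN) (U : TN -> Prop) (V : Gsub G -> Prop)
  : TN -> Prop :=
  fun y => exists (y' : TN) (g : Gsub G),
    lchain U V x y' /\ V g /\ U (act g y') /\ y = act g y'.

Definition symmetric_open_nbhd_id (G : TN -> Prop) (tau : (Gsub G -> Prop) -> Prop)
    (V : Gsub G -> Prop) : Prop :=
  tau V /\ (forall g : Gsub G, proj1_sig g = TNone -> V g) /\
  (forall g h : Gsub G, proj1_sig h = TNinv (proj1_sig g) -> V g -> V h).

Definition turbulent (G : TN -> Prop) (tau : (Gsub G -> Prop) -> Prop) : Prop :=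
  action_continuous G tau /\
  (forall x, dense TN_open (@orbit G x)) /\
  (forall x, meager TN_open (@orbit G x)) /\
  (forall (U : TN -> Prop) (V : Gsub G -> Prop) (x : TN),
     TN_open U -> symmetric_open_nbhd_id G tau V -> U x ->
     exists y, interior TN_open (closure TN_open (local_orbit x U V)) y).

From Pilot Require Import Defs.
From Stdlib Require Import Reals Lra Psatz Lia ZArith ProofIrrelevance FunctionalExtensionality
  Classical ClassicalEpsilon Cantor.
Open Scope R_scope.

(* Orbits are dense because G is strongly dense. By Pettis' lemma a non-meager Borel subgroup of
   T^N contains a neighbourhood of 1, hence is open and, being dense, everything; so the proper
   subgroup G and its cosets, the orbits, are meager. Pettis' lemma inside the Polish group G,
   applied to a cover of G by countably many small boxes, makes the inclusion G -> T^N continuous,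
   which gives continuity of the action.
   For local orbits, the Baire theorem in T^N shows that for every neighbourhood V of 1 in G the
   quotients V V^-1 are dense near 1 on any finitely many coordinates. From x, one step of V moves
   close to a target z on the coordinates controlling the open set U; then the iterates of an element
   h that is nearly 1 on those coordinates and nearly an M-th root of z/x on finitely many others
   walk the remaining coordinates to z without leaving U. *)

(** * The circle group *)

Definition tre (z : Tpt) : R := fst (proj1_sig z).
Definition tim (z : Tpt) : R := snd (proj1_sig z).

Lemma tnorm1 z : tre z * tre z + tim z * tim z = 1.
Proof. exact (proj2_sig z). Qed.

Lemma Tpt_eq z w : tre z = tre w -> tim z = tim w -> z = w.
Proof.
  destruct z as [[a b] p], w as [[c d] q]; unfold tre, tim; simpl; intros -> ->.
  f_equal; apply proof_irrelevance.
Qed.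

Lemma tre_mul z w : tre (tmul z w) = tre z * tre w - tim z * tim w. Proof. reflexivity. Qed.
Lemma tim_mul z w : tim (tmul z w) = tre z * tim w + tim z * tre w. Proof. reflexivity. Qed.
Lemma tre_inv z : tre (tinv z) = tre z. Proof. reflexivity. Qed.
Lemma tim_inv z : tim (tinv z) = - tim z. Proof. reflexivity. Qed.
Lemma tre_one : tre tone = 1. Proof. reflexivity. Qed.
Lemma tim_one : tim tone = 0. Proof. reflexivity. Qed.

Ltac tsimp := repeat rewrite ?tre_mul, ?tim_mul, ?tre_inv, ?tim_inv, ?tre_one, ?tim_one.

Lemma tre_ge_m1 z : -1 <= tre z. Proof. pose proof (tnorm1 z); nra. Qed.
Lemma tim_ge_m1 z : -1 <= tim z. Proof. pose proof (tnorm1 z); nra. Qed.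

Lemma tmulC x y : tmul x y = tmul y x. Proof. apply Tpt_eq; tsimp; ring. Qed.
Lemma tmulA x y z : tmul x (tmul y z) = tmul (tmul x y) z. Proof. apply Tpt_eq; tsimp; ring. Qed.
Lemma tmul1l x : tmul tone x = x. Proof. apply Tpt_eq; tsimp; ring. Qed.
Lemma tmul1r x : tmul x tone = x. Proof. apply Tpt_eq; tsimp; ring. Qed.
Lemma tmulV x : tmul x (tinv x) = tone. Proof. pose proof (tnorm1 x); apply Tpt_eq; tsimp; nra. Qed.
Lemma tmulVl x : tmul (tinv x) x = tone. Proof. rewrite tmulC; apply tmulV. Qed.
Lemma tinvK x : tinv (tinv x) = x. Proof. apply Tpt_eq; tsimp; ring. Qed.
Lemma tinv1 : tinv tone = tone. Proof. apply Tpt_eq; tsimp; ring. Qed.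
Lemma tmulVK y x : tmul (tmul y (tinv x)) x = y.
Proof. rewrite <- tmulA, tmulVl, tmul1r; reflexivity. Qed.

Definition tdist2 x y := (tre x - tre y) * (tre x - tre y) + (tim x - tim y) * (tim x - tim y).

Lemma tdistE x y : tdist x y = sqrt (tdist2 x y).
Proof. unfold tdist, tdist2, tre, tim; f_equal; ring. Qed.
Lemma tdist2_ge0 x y : 0 <= tdist2 x y.
Proof. unfold tdist2; apply Rplus_le_le_0_compat; apply Rle_0_sqr. Qed.
Lemma tdist_ge0 x y : 0 <= tdist x y.
Proof. rewrite tdistE; apply sqrt_pos. Qed.
Lemma tdist_sqr x y : tdist x y * tdist x y = tdist2 x y.
Proof. rewrite tdistE; apply sqrt_sqrt, tdist2_ge0. Qed.

Lemma le_of_sqr_le a b : 0 <= b -> a * a <= b * b -> a <= b.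
Proof. intros Hb H; apply Rsqr_incr_0_var; unfold Rsqr; lra. Qed.

Lemma tdist_xx x : tdist x x = 0.
Proof. rewrite tdistE; replace (tdist2 x x) with 0 by (unfold tdist2; ring); apply sqrt_0. Qed.
Lemma tdistC x y : tdist x y = tdist y x.
Proof. rewrite !tdistE; unfold tdist2; f_equal; ring. Qed.

Lemma cauchy_schwarz2 u1 v1 u2 v2 p q : 0 <= p -> 0 <= q ->
  p * p = u1 * u1 + v1 * v1 -> q * q = u2 * u2 + v2 * v2 -> u1 * u2 + v1 * v2 <= p * q.
Proof.
  intros Hp Hq Ep Eq; apply le_of_sqr_le; [nra|].
  replace ((p * q) * (p * q)) with ((p * p) * (q * q)) by ring; rewrite Ep, Eq.
  pose proof (Rle_0_sqr (u1 * v2 - v1 * u2)); unfold Rsqr in *; nra.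
Qed.

Lemma tdist_triangle x y z : tdist x z <= tdist x y + tdist y z.
Proof.
  pose proof (tdist_ge0 x y) as Hxy; pose proof (tdist_ge0 y z) as Hyz.
  apply le_of_sqr_le; [lra|]; rewrite tdist_sqr.
  pose proof (tdist_sqr x y) as Exy; pose proof (tdist_sqr y z) as Eyz; unfold tdist2 in *.
  pose proof (cauchy_schwarz2 _ _ _ _ _ _ Hxy Hyz Exy Eyz); nra.
Qed.

Lemma tdist_tre_le x y : Rabs (tre x - tre y) <= tdist x y.
Proof.
  pose proof (Rle_0_sqr (tre x - tre y)); pose proof (Rle_0_sqr (tim x - tim y)); unfold Rsqr in *.
  apply le_of_sqr_le; [apply tdist_ge0|]; rewrite tdist_sqr, <- Rabs_mult, Rabs_right;
  unfold tdist2; lra.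
Qed.
Lemma tdist_tim_le x y : Rabs (tim x - tim y) <= tdist x y.
Proof.
  pose proof (Rle_0_sqr (tre x - tre y)); pose proof (Rle_0_sqr (tim x - tim y)); unfold Rsqr in *.
  apply le_of_sqr_le; [apply tdist_ge0|]; rewrite tdist_sqr, <- Rabs_mult, Rabs_right;
  unfold tdist2; lra.
Qed.
Lemma tdist_le_tre_tim x y : tdist x y <= Rabs (tre x - tre y) + Rabs (tim x - tim y).
Proof.
  pose proof (Rabs_pos (tre x - tre y)); pose proof (Rabs_pos (tim x - tim y)).
  apply le_of_sqr_le; [lra|]; rewrite tdist_sqr; unfold tdist2.
  pose proof (Rle_0_sqr (tre x - tre y)); pose proof (Rle_0_sqr (tim x - tim y)); unfold Rsqr in *.
  rewrite <- (Rabs_right ((tre x - tre y) * (tre x - tre y))),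
    <- (Rabs_right ((tim x - tim y) * (tim x - tim y))),
    !Rabs_mult by lra; nra.
Qed.

Lemma tdist_mull z x y : tdist (tmul z x) (tmul z y) = tdist x y.
Proof.
  rewrite !tdistE; f_equal; unfold tdist2; tsimp; pose proof (tnorm1 z).
  transitivity ((tre z * tre z + tim z * tim z) *
    ((tre x - tre y) * (tre x - tre y) + (tim x - tim y) * (tim x - tim y))); [ring|].
  rewrite H; ring.
Qed.
Lemma tdist_mulr z x y : tdist (tmul x z) (tmul y z) = tdist x y.
Proof. rewrite (tmulC x), (tmulC y); apply tdist_mull. Qed.
Lemma tdist_mul_le a b c d : tdist (tmul a b) (tmul c d) <= tdist a c + tdist b d.
Proof.
  eapply Rle_trans; [apply (tdist_triangle _ (tmul c b))|].
  rewrite tdist_mulr, tdist_mull; lra.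
Qed.
Lemma tdist_div1 x y : tdist (tmul x (tinv y)) tone = tdist x y.
Proof. rewrite <- (tmulV y), tdist_mulr; reflexivity. Qed.

(** * Topology, category and Borel sets *)

Section Topology.
Variables (X : Type) (O : (X -> Prop) -> Prop).

Lemma open_full : is_topology O -> O (fun _ => True).
Proof. intros [_ [H _]]; exact H. Qed.

Lemma open_inter : is_topology O -> forall U V, O U -> O V -> O (fun x => U x /\ V x).
Proof. intros [_ [_ [H _]]]; exact H. Qed.

Lemma open_of_local : is_topology O -> forall P : X -> Prop,
  (forall x, P x -> exists Q, O Q /\ Q x /\ forall y, Q y -> P y) -> O P.
Proof.
  intros [Hext [_ [_ Hunion]]] P H.
  apply (Hext (fun x => exists Q, (O Q /\ forall y, Q y -> P y) /\ Q x)).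
  - intros x; split; [intros [Q [[_ HQ] Qx]]; auto|].
    intros Px; destruct (H x Px) as [Q [OQ [Qx HQ]]]; exists Q; auto.
  - apply Hunion; intros Q [OQ _]; exact OQ.
Qed.

Lemma subset_closure (A : X -> Prop) x : A x -> closure O A x.
Proof. intros Ax U _ Ux; exists x; auto. Qed.

Lemma closure_idem (A : X -> Prop) x : closure O (closure O A) x -> closure O A x.
Proof. intros H U OU Ux; destruct (H U OU Ux) as [y [Uy Hy]]; exact (Hy U OU Uy). Qed.

Lemma closureS (A B : X -> Prop) :
  (forall x, A x -> B x) -> forall x, closure O A x -> closure O B x.
Proof. intros HAB x H U OU Ux; destruct (H U OU Ux) as [y [Uy Ay]]; eauto. Qed.

Lemma meagerS (A B : X -> Prop) : (forall x, A x -> B x) -> meager O B -> meager O A.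
Proof. intros HAB [N [HN HB]]; exists N; split; auto. Qed.

Lemma meager0 : is_topology O -> meager O (fun _ => False).
Proof.
  intros T; exists (fun _ _ => False); split; [|intros x []].
  intros _ x [U [_ [Ux HU]]].
  destruct (HU x Ux (fun _ => True) (open_full T) I) as [y [_ []]].
Qed.

Lemma meager_countable_union (A : nat -> X -> Prop) :
  (forall n, meager O (A n)) -> meager O (fun x => exists n, A n x).
Proof.
  intros H.
  destruct (choice (fun n N =>
    (forall k, nowhere_dense O (N k)) /\ forall x, A n x -> exists k, N k x) H)
    as [N HN].
  exists (fun k => N (fst (of_nat k)) (snd (of_nat k))); split; [intros k; apply HN|].
  intros x [n Hn]; destruct (proj2 (HN n) x Hn) as [k Hk].
  exists (to_nat (n, k)); rewrite cancel_of_to; exact Hk.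
Qed.

Lemma meagerU (A B : X -> Prop) :
  meager O A -> meager O B -> meager O (fun x => A x \/ B x).
Proof.
  intros HA HB; apply (meagerS _ (fun x => exists n, (if Nat.eqb n 0 then A else B) x)).
  - intros x [Ax|Bx]; [exists 0%nat | exists 1%nat]; auto.
  - apply meager_countable_union; intros [|n]; auto.
Qed.

Lemma boundary_nowhere_dense : is_topology O -> forall U, O U ->
  nowhere_dense O (fun x => closure O U x /\ ~ U x).
Proof.
  intros T U OU x [W [OW [Wx HW]]].
  assert (Hx : closure O U x).
  { apply closure_idem, (closureS (fun y => closure O U y /\ ~ U y) _ (fun y H => proj1 H)), HW, Wx. }
  destruct (Hx W OW Wx) as [y [Wy Uy]].
  destruct (HW y Wy (fun z => W z /\ U z) (open_inter T W U OW OU) (conj Wy Uy))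
    as [z [[_ Uz] [_ nUz]]].
  contradiction.
Qed.

Definition baire_property (A : X -> Prop) : Prop :=
  exists U, O U /\ meager O (fun x => ~ (A x <-> U x)).

Lemma baire_property_compl : is_topology O ->
  forall A, baire_property A -> baire_property (fun x => ~ A x).
Proof.
  intros T A [U [OU HU]]; exists (fun x => ~ closure O U x); split.
  - apply open_of_local; auto; intros x Hx.
    apply not_all_ex_not in Hx as [Q Hx]; apply imply_to_and in Hx as [OQ Hx].
    apply imply_to_and in Hx as [Qx Hx].
    exists Q; repeat split; auto; intros y Qy Hy; exact (Hx (Hy Q OQ Qy)).
  - apply (meagerS _ (fun x => ~ (A x <-> U x) \/ (closure O U x /\ ~ U x))).
    + intros x H; destruct (classic (A x <-> U x)) as [Hq|Hq]; [right|left; auto].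
      destruct (classic (U x)) as [Ux|Ux].
      * exfalso; apply H; split; intros h; exfalso; [apply h, Hq, Ux | apply h, subset_closure, Ux].
      * split; auto; apply NNPP; intros Hc; apply H; split; [intros _ Hcl; apply Hc, Hcl|].
        intros _ Ax; apply Ux, Hq, Ax.
    + apply meagerU; auto; exists (fun _ x => closure O U x /\ ~ U x); split.
      * intros _; apply boundary_nowhere_dense; auto.
      * intros x Hx; exists 0%nat; exact Hx.
Qed.

Lemma baire_property_countable_union : is_topology O -> forall A : nat -> X -> Prop,
  (forall n, baire_property (A n)) -> baire_property (fun x => exists n, A n x).
Proof.
  intros T A HA.
  destruct (choice (fun n U => O U /\ meager O (fun x => ~ (A n x <-> U x))) HA) as [U HU].
  exists (fun x => exists n, U n x); split.
  - destruct T as [Hext [_ [_ Hunion]]].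
    apply (Hext (fun x => exists W, (exists n, forall y, W y <-> U n y) /\ W x)).
    + intros x; split; [intros [W [[n Hn] Wx]]; exists n; apply Hn, Wx|].
      intros [n Hn]; exists (U n); split; [exists n; tauto | exact Hn].
    + apply Hunion; intros W [n Hn]; apply (Hext (U n)); [intros y; rewrite Hn; tauto | apply HU].
  - apply (meagerS _ (fun x => exists n, ~ (A n x <-> U n x))).
    + intros x H; apply NNPP; intros Hc; apply H.
      split; intros [n Hn]; exists n; apply NNPP; intros Hd; apply Hc; exists n;
        intros He; apply Hd, He, Hn.
    + apply meager_countable_union; intros n; apply HU.
Qed.

Lemma baire_property_sigma_algebra : is_topology O -> sigma_algebra baire_property.
Proof.
  intros T; split; [|split; [|split]].
  - intros A B HAB [U [OU HU]]; exists U; split; auto.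
    refine (meagerS _ _ _ HU); intros x H Hc; apply H; rewrite <- HAB; exact Hc.
  - exists (fun _ => True); split; [apply open_full; auto|].
    apply (meagerS _ (fun _ => False)); [intros x H; apply H; tauto | apply meager0; auto].
  - apply baire_property_compl; auto.
  - apply baire_property_countable_union; auto.
Qed.

Lemma borel_baire_property : is_topology O -> forall A, borel O A -> baire_property A.
Proof.
  intros T A HA; apply HA; [apply baire_property_sigma_algebra; auto|].
  intros U OU; exists U; split; auto.
  apply (meagerS _ (fun _ => False)); [intros x H; apply H; tauto | apply meager0; auto].
Qed.

Lemma borel_open U : O U -> borel O U.
Proof. intros OU S _ HS; auto. Qed.

Lemma borel_ext (A B : X -> Prop) : (forall x, A x <-> B x) -> borel O A -> borel O B.
Proof. intros H HA S HS HO; apply (proj1 HS A B H), HA; auto. Qed.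

Lemma borel_inter (A B : X -> Prop) : borel O A -> borel O B -> borel O (fun x => A x /\ B x).
Proof.
  intros HA HB S HS HO; pose proof HS as [Hext [_ [Hcompl Hunion]]].
  apply (Hext (fun x => ~ exists n, (if Nat.eqb n 0 then fun y => ~ A y else fun y => ~ B y) x)).
  - intros x; split.
    + intros H; split; apply NNPP; intros Hc; apply H; [exists 0%nat | exists 1%nat]; exact Hc.
    + intros [Ax Bx] [[|n] Hn]; auto.
  - apply Hcompl, Hunion; intros [|n]; apply Hcompl;
      [apply HA | apply HB]; auto.
Qed.

End Topology.

Arguments baire_property {X} O A.

(** * The Baire category theorem *)

Definition half_pow (k : nat) : R := (/ 2) ^ k.

Lemma half_pow_gt0 k : 0 < half_pow k.
Proof. unfold half_pow; apply pow_lt; lra. Qed.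

Lemma half_powS k : half_pow (S k) = half_pow k / 2.
Proof. unfold half_pow; simpl; lra. Qed.

Lemma half_pow_le k k' : (k <= k')%nat -> half_pow k' <= half_pow k.
Proof. induction 1; [lra|]; rewrite half_powS; pose proof (half_pow_gt0 m); lra. Qed.

Lemma half_pow_lt e : 0 < e -> exists k, half_pow k < e.
Proof.
  intros He; destruct (pow_lt_1_zero (/ 2)) with (y := e) as [N HN]; auto.
  - rewrite Rabs_right; lra.
  - exists N; specialize (HN N (le_n _)); unfold half_pow.
    rewrite Rabs_right in HN; [exact HN | apply Rle_ge, pow_le; lra].
Qed.

Lemma strict_mono_le (kk : nat -> nat) : (forall j, (kk j < kk (S j))%nat) ->
  forall j j', (j <= j')%nat -> (kk j <= kk j')%nat.
Proof. intros H j j' Hj; induction Hj; [lia | specialize (H m); lia]. Qed.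

Lemma strict_mono_ge_id (kk : nat -> nat) : (forall j, (kk j < kk (S j))%nat) ->
  forall j, (j <= kk j)%nat.
Proof. intros H j; induction j; [lia | specialize (H j); lia]. Qed.

(* The summand [half_pow (kk j' + 1)] is the budget left for the tail; it makes the bound inductive. *)
Lemma geometric_chain_bound {X} (d : X -> X -> R) (s : nat -> X) (kk : nat -> nat) j :
  (forall x, d x x = 0) -> (forall x y z, d x z <= d x y + d y z) ->
  (forall j, (kk j < kk (S j))%nat) ->
  (forall m, (j <= m)%nat -> d (s m) (s (S m)) < half_pow (kk m + 2)) ->
  forall j', (j <= j')%nat -> d (s j) (s j') + half_pow (kk j' + 1) <= half_pow (kk j + 1).
Proof.
  intros Dxx Dtri Hk Hs j' Hj; induction Hj; [rewrite Dxx; lra|].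
  pose proof (Hk m); pose proof (Hs m Hj); pose proof (Dtri (s j) (s m) (s (S m))).
  pose proof (half_pow_le (kk m + 2) (kk (S m) + 1) ltac:(lia)).
  replace (kk m + 2)%nat with (S (kk m + 1)) in * by lia; rewrite half_powS in *; lra.
Qed.

Section BaireFromBalls.
Variables (X : Type) (O : (X -> Prop) -> Prop) (ball : X -> nat -> X -> Prop).
Hypothesis open_balls : forall U, O U -> forall x, U x -> exists k, forall y, ball x k y -> U y.
Hypothesis balls_open : forall U, (forall x, U x -> exists k, forall y, ball x k y -> U y) -> O U.
Hypothesis ball_center : forall x k, ball x k x.
Hypothesis ball_inner : forall x k y, ball x k y -> exists k', forall z, ball y k' z -> ball x k z.
Hypothesis ball_antitone : forall x k k' y, (k <= k')%nat -> ball x k' y -> ball x k y.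
Hypothesis ball_complete : forall (s : nat -> X) (kk : nat -> nat),
  (forall j, (kk j < kk (S j))%nat) -> (forall j, ball (s j) (kk j + 2) (s (S j))) ->
  exists L, forall j, ball (s j) (kk j) L.

Lemma ball_open x k : O (ball x k).
Proof. apply balls_open; intros y Hy; destruct (ball_inner x k y Hy) as [k' Hk']; eauto. Qed.

Lemma ball_avoid_nowhere_dense (N : X -> Prop) x k : nowhere_dense O N ->
  exists y k', ball x (k + 2) y /\ (k < k')%nat /\ forall z, ball y k' z -> ~ N z.
Proof.
  intros HN.
  assert (Hn : ~ forall y, ball x (k + 2) y -> closure O N y).
  { intros Hc; apply (HN x); exists (ball x (k + 2)); repeat split; auto; apply ball_open. }
  apply not_all_ex_not in Hn as [y Hy]; apply imply_to_and in Hy as [By Hy].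
  apply not_all_ex_not in Hy as [Q Hy]; apply imply_to_and in Hy as [OQ Hy].
  apply imply_to_and in Hy as [Qy Hy].
  destruct (open_balls Q OQ y Qy) as [k' Hk'].
  exists y, (k' + k + 1)%nat; repeat split; auto; [lia|].
  intros z Bz Nz; apply Hy; exists z; split; auto.
  apply Hk', (ball_antitone _ _ (k' + k + 1)); auto; lia.
Qed.

Theorem baire_from_balls U : O U -> (exists x, U x) -> ~ meager O U.
Proof.
  intros OU [x0 Ux0] [N [HN HU]].
  assert (step : forall j (p : X * nat), exists q : X * nat,
    ball (fst p) (snd p + 2) (fst q) /\ (snd p < snd q)%nat /\
    forall z, ball (fst q) (snd q) z -> ~ N j z).
  { intros j [x k]; destruct (ball_avoid_nowhere_dense (N j) x k (HN j)) as [y [k' H]].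
    exists (y, k'); exact H. }
  destruct (choice (fun jp q => _) (fun jp => step (fst jp) (snd jp))) as [f Hf].
  destruct (open_balls U OU x0 Ux0) as [k0 Hk0].
  pose (sq := fix sq (n : nat) : X * nat :=
    match n with 0%nat => (x0, k0) | S j => f (j, sq j) end).
  destruct (ball_complete (fun n => fst (sq n)) (fun n => snd (sq n))) as [L HL];
    [intros j; apply (Hf (j, sq j)) ..|].
  destruct (HU L (Hk0 L (HL 0%nat))) as [j Nj].
  exact (proj2 (proj2 (Hf (j, sq j))) L (HL (S j)) Nj).
Qed.

End BaireFromBalls.

Lemma metric_baire {X} (O : (X -> Prop) -> Prop) (d : X -> X -> R) :
  metric d -> complete_metric d -> (forall U, O U <-> metric_open d U) ->
  forall U, O U -> (exists x, U x) -> ~ meager O U.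
Proof.
  intros [Dpos [Dzero [Dsym Dtri]]] Dcomplete HO.
  assert (Dxx : forall x, d x x = 0) by (intros x; apply Dzero; reflexivity).
  apply (baire_from_balls X O (fun x k y => d x y < half_pow k)).
  - intros U OU x Ux; destruct (proj1 (HO U) OU x Ux) as [e [He H]].
    destruct (half_pow_lt e He) as [k Hk]; exists k; intros y Hy; apply H; lra.
  - intros U H; apply HO; intros x Ux; destruct (H x Ux) as [k Hk].
    exists (half_pow k); split; [apply half_pow_gt0 | exact Hk].
  - intros x k; rewrite Dxx; apply half_pow_gt0.
  - intros x k y Hxy; destruct (half_pow_lt (half_pow k - d x y) ltac:(lra)) as [k' Hk'].
    exists k'; intros z Hz; pose proof (Dtri x y z); lra.
  - intros x k k' y Hk H; pose proof (half_pow_le k k' Hk); lra.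
  - intros s kk Hk Hs.
    pose proof (fun j => geometric_chain_bound d s kk j Dxx Dtri Hk (fun m _ => Hs m)) as Inv.
    destruct (Dcomplete s) as [L HL].
    + intros e He; destruct (half_pow_lt e He) as [N HN]; exists N; intros m n Hm Hn.
      pose proof (Inv N m Hm); pose proof (Inv N n Hn).
      pose proof (half_pow_gt0 (kk n + 1)); pose proof (half_pow_gt0 (kk m + 1)).
      pose proof (Dtri (s m) (s N) (s n)); rewrite (Dsym (s m) (s N)) in *.
      pose proof (half_pow_le N (kk N) (strict_mono_ge_id kk Hk N)).
      rewrite (Nat.add_1_r (kk N)), half_powS in *; lra.
    + exists L; intros j; pose proof (half_pow_gt0 (kk j + 1)) as Hr.
      destruct (HL _ Hr) as [N HN]; specialize (HN (max j N) ltac:(lia)).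
      pose proof (Inv j (max j N) ltac:(lia)); pose proof (half_pow_gt0 (kk (max j N) + 1)).
      pose proof (Dtri (s j) (s (max j N)) L).
      rewrite (Nat.add_1_r (kk j)), half_powS in *; lra.
Qed.

(** * Pettis' lemma *)

Record BaireAbGroup := {
  bg_car : Type;
  bg_open : (bg_car -> Prop) -> Prop;
  bg_mul : bg_car -> bg_car -> bg_car;
  bg_inv : bg_car -> bg_car;
  bg_one : bg_car;
  bg_topology : is_topology bg_open;
  bg_mulC : forall x y, bg_mul x y = bg_mul y x;
  bg_mulA : forall x y z, bg_mul x (bg_mul y z) = bg_mul (bg_mul x y) z;
  bg_mul1 : forall x, bg_mul bg_one x = x;
  bg_mulV : forall x, bg_mul x (bg_inv x) = bg_one;
  bg_open_translate : forall a W, bg_open W -> bg_open (fun x => W (bg_mul a x));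
  bg_baire : forall U, bg_open U -> (exists x, U x) -> ~ meager bg_open U }.

Section BaireAbGroupTheory.
Variable A : BaireAbGroup.
Local Notation mul := (bg_mul A).
Local Notation inv := (bg_inv A).
Local Notation open := (bg_open A).

Lemma bg_mulKl a y : mul (inv a) (mul a y) = y.
Proof. rewrite bg_mulA, (bg_mulC A (inv a)), bg_mulV, bg_mul1; reflexivity. Qed.

Lemma bg_mulVKl a y : mul a (mul (inv a) y) = y.
Proof. rewrite bg_mulA, bg_mulV, bg_mul1; reflexivity. Qed.

Lemma translate_nowhere_dense (N : bg_car A -> Prop) a :
  nowhere_dense open N -> nowhere_dense open (fun y => N (mul a y)).
Proof.
  intros HN x [W [OW [Wx HW]]]; apply (HN (mul a x)).
  exists (fun z => W (mul (inv a) z)); split; [apply bg_open_translate; exact OW|].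
  split; [rewrite bg_mulKl; exact Wx|].
  intros z Wz Q OQ Qz.
  destruct (HW _ Wz (fun y => Q (mul a y)) (bg_open_translate A a Q OQ)) as [y [Qy Ny]];
    [rewrite bg_mulVKl; exact Qz|].
  exists (mul a y); auto.
Qed.

Lemma translate_meager (M : bg_car A -> Prop) a :
  meager open M -> meager open (fun y => M (mul a y)).
Proof.
  intros [N [HN HM]]; exists (fun n y => N n (mul a y)); split.
  - intros n; apply translate_nowhere_dense, HN.
  - intros x Hx; apply HM, Hx.
Qed.

Lemma pettis (S : bg_car A -> Prop) : baire_property open S -> ~ meager open S ->
  exists W, open W /\ W (bg_one A) /\
    forall w, W w -> exists a b, S a /\ S b /\ w = mul a (inv b).
Proof.
  intros [U [OU HM]] HS.
  assert (Hu : exists u, U u).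
  { apply NNPP; intros Hc; apply HS; refine (meagerS _ _ _ _ _ HM).
    intros x Sx Hx; apply Hc; exists x; apply Hx, Sx. }
  destruct Hu as [u Uu].
  exists (fun w => U (mul u w)); split; [apply bg_open_translate; exact OU|].
  split; [rewrite bg_mulC, bg_mul1; exact Uu|].
  intros w Uw; apply NNPP; intros Hc.
  (* [U ∩ wU] is open and nonempty, but avoiding [S ∩ wS] it lies in [(S Δ U) ∪ w(S Δ U)]. *)
  apply (bg_baire A (fun y => U y /\ U (mul (inv w) y))).
  - apply open_inter; [apply bg_topology | exact OU | apply bg_open_translate, OU].
  - exists (mul u w); split; auto; rewrite (bg_mulC A u w), bg_mulKl; exact Uu.
  - apply (meagerS _ _ _ (fun y => ~ (S y <-> U y) \/ ~ (S (mul (inv w) y) <-> U (mul (inv w) y)))).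
    + intros y [Uy Uy']; destruct (classic (S y)) as [Sy|Sy]; [right|left; intros Hq; apply Sy, Hq, Uy].
      intros Hq; apply Hc; exists y, (mul (inv w) y); repeat split; auto; [apply Hq, Uy'|].
      set (b := mul (inv w) y).
      assert (Ey : y = mul w b) by (unfold b; rewrite bg_mulVKl; reflexivity).
      rewrite Ey at 1; rewrite <- bg_mulA, bg_mulV, bg_mulC, bg_mul1; reflexivity.
    + apply meagerU; [exact HM | apply (translate_meager (fun x => ~ (S x <-> U x))), HM].
Qed.

End BaireAbGroupTheory.

(** * The group T^N *)

Lemma TN_eq (x y : TN) : (forall i, x i = y i) -> x = y.
Proof. apply functional_extensionality. Qed.

Lemma TNmulC x y : TNmul x y = TNmul y x. Proof. apply TN_eq; intros; apply tmulC. Qed.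
Lemma TNmulA x y z : TNmul x (TNmul y z) = TNmul (TNmul x y) z.
Proof. apply TN_eq; intros; apply tmulA. Qed.
Lemma TNmul1 x : TNmul TNone x = x. Proof. apply TN_eq; intros; apply tmul1l. Qed.
Lemma TNmulV x : TNmul x (TNinv x) = TNone. Proof. apply TN_eq; intros; apply tmulV. Qed.
Lemma TNinvK x : TNinv (TNinv x) = x. Proof. apply TN_eq; intros; apply tinvK. Qed.
Lemma TNinv1 : TNinv TNone = TNone. Proof. apply TN_eq; intros; apply tinv1. Qed.

Lemma finite_margin (f : nat -> R) (c : R) n : (forall i, (i <= n)%nat -> f i < c) ->
  exists r, 0 < r /\ forall i, (i <= n)%nat -> f i + r < c.
Proof.
  induction n as [|n IH]; intros H.
  - exists ((c - f 0%nat) / 2); specialize (H 0%nat (le_n _)); split; [lra|].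
    intros i Hi; replace i with 0%nat by lia; lra.
  - destruct IH as [r [Hr Hi]]; [intros; apply H; lia|].
    specialize (H (S n) (le_n _)); exists (Rmin r ((c - f (S n)) / 2)); split.
    + apply Rmin_glb_lt; lra.
    + pose proof (Rmin_l r ((c - f (S n)) / 2)); pose proof (Rmin_r r ((c - f (S n)) / 2)).
      intros i Hil; destruct (Nat.eq_dec i (S n)) as [->|]; [lra|].
      specialize (Hi i ltac:(lia)); lra.
Qed.

Definition cyl (x : TN) (n : nat) (e : R) (y : TN) : Prop :=
  forall i, (i <= n)%nat -> tdist (x i) (y i) < e.

Lemma cyl_center x n e : 0 < e -> cyl x n e x.
Proof. intros He i _; rewrite tdist_xx; exact He. Qed.

Lemma cyl_open x n e : TN_open (cyl x n e).
Proof.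
  intros y Hy; destruct (finite_margin (fun i => tdist (x i) (y i)) e n Hy) as [r [Hr Hm]].
  exists n, r; split; auto; intros z Hz i Hi.
  pose proof (tdist_triangle (x i) (y i) (z i)); specialize (Hm i Hi); specialize (Hz i Hi).
  simpl in Hm; lra.
Qed.

Lemma TN_topology : is_topology TN_open.
Proof.
  split; [|split; [|split]].
  - intros U V HUV HU x Vx; destruct (HU x (proj2 (HUV x) Vx)) as [n [e [He H]]].
    exists n, e; split; auto; intros y Hy; apply HUV, H, Hy.
  - intros x _; exists 0%nat, 1; split; auto; lra.
  - intros U V HU HV x [Ux Vx].
    destruct (HU x Ux) as [n [e [He H]]], (HV x Vx) as [n' [e' [He' H']]].
    exists (max n n'), (Rmin e e'); split; [apply Rmin_glb_lt; auto|].
    pose proof (Rmin_l e e'); pose proof (Rmin_r e e').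
    intros y Hy; split; [apply H | apply H']; intros i Hi; specialize (Hy i ltac:(lia)); lra.
  - intros F HF x [U [FU Ux]]; destruct (HF U FU x Ux) as [n [e [He H]]].
    exists n, e; split; auto; intros y Hy; exists U; auto.
Qed.

Lemma TN_open_translate a W : TN_open W -> TN_open (fun x => W (TNmul a x)).
Proof.
  intros HW x Wx; destruct (HW _ Wx) as [n [e [He H]]]; exists n, e; split; auto.
  intros y Hy; apply H; intros i Hi; unfold TNmul; rewrite tdist_mull; auto.
Qed.

Definition TN_ball (x : TN) (k : nat) : TN -> Prop := cyl x k (half_pow k).

Lemma TN_ball_antitone x k k' y : (k <= k')%nat -> TN_ball x k' y -> TN_ball x k y.
Proof.
  intros Hk H i Hi; specialize (H i ltac:(lia)); pose proof (half_pow_le k k' Hk); lra.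
Qed.

Lemma TN_open_balls U x : (exists n e, 0 < e /\ forall y, cyl x n e y -> U y) ->
  exists k, forall y, TN_ball x k y -> U y.
Proof.
  intros [n [e [He H]]]; destruct (half_pow_lt e He) as [k0 Hk0].
  exists (max n k0); intros y Hy; apply H; intros i Hi; specialize (Hy i ltac:(lia)).
  pose proof (half_pow_le k0 (max n k0) ltac:(lia)); lra.
Qed.

Lemma Tpt_complete (u : nat -> Tpt) :
  (forall e, 0 < e -> exists N, forall m n, (N <= m)%nat -> (N <= n)%nat -> tdist (u m) (u n) < e) ->
  exists l : Tpt, forall e, 0 < e -> exists N, forall n, (N <= n)%nat -> tdist (u n) l < e.
Proof.
  intros Hc.
  assert (Hcoord : forall f : Tpt -> R, (forall x y, Rabs (f x - f y) <= tdist x y) ->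
    Cauchy_crit (fun n => f (u n))).
  { intros f Hf e He; destruct (Hc e He) as [N HN]; exists N; intros n m Hn Hm.
    unfold R_dist; eapply Rle_lt_trans; [apply Hf | apply HN; auto]. }
  destruct (R_complete _ (Hcoord tre tdist_tre_le)) as [a Ha].
  destruct (R_complete _ (Hcoord tim tdist_tim_le)) as [b Hb].
  assert (Hab : fst (a, b) * fst (a, b) + snd (a, b) * snd (a, b) = 1).
  { simpl; apply (UL_sequence (fun n => tre (u n) * tre (u n) + tim (u n) * tim (u n))).
    - apply CV_plus; apply CV_mult; auto.
    - intros e He; exists 0%nat; intros n _; rewrite tnorm1.
      unfold R_dist; rewrite Rminus_diag, Rabs_R0; exact He. }
  exists (exist _ (a, b) Hab); intros e He.
  destruct (Ha (e / 2) ltac:(lra)) as [Na HNa], (Hb (e / 2) ltac:(lra)) as [Nb HNb].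
  exists (max Na Nb); intros n Hn.
  specialize (HNa n ltac:(lia)); specialize (HNb n ltac:(lia)); unfold R_dist in *.
  pose proof (tdist_le_tre_tim (u n) (exist _ (a, b) Hab)) as H.
  change (tre (exist _ (a, b) Hab)) with a in H; change (tim (exist _ (a, b) Hab)) with b in H.
  lra.
Qed.

Lemma TN_ball_complete (s : nat -> TN) (kk : nat -> nat) :
  (forall j, (kk j < kk (S j))%nat) -> (forall j, TN_ball (s j) (kk j + 2) (s (S j))) ->
  exists L, forall j, TN_ball (s j) (kk j) L.
Proof.
  intros Hk Hs.
  assert (Inv : forall i j j', (i <= kk j)%nat -> (j <= j')%nat ->
    tdist (s j i) (s j' i) + half_pow (kk j' + 1) <= half_pow (kk j + 1)).
  { intros i j j' Hi; apply (geometric_chain_bound (fun x y => tdist (x i) (y i)));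
      [intros; apply tdist_xx | intros; apply tdist_triangle | exact Hk|].
    intros m Hm; apply Hs; pose proof (strict_mono_le kk Hk j m Hm); lia. }
  assert (Hlim : forall i, exists l, forall e, 0 < e -> exists N, forall n, (N <= n)%nat ->
    tdist (s n i) l < e).
  { intros i; apply Tpt_complete; intros e He; destruct (half_pow_lt e He) as [k0 Hk0].
    exists (max i k0); intros m n Hm Hn; set (N := max i k0) in *.
    assert (HiN : (i <= kk N)%nat) by (pose proof (strict_mono_ge_id kk Hk N); lia).
    pose proof (Inv i N m HiN Hm); pose proof (Inv i N n HiN Hn).
    pose proof (half_pow_gt0 (kk m + 1)); pose proof (half_pow_gt0 (kk n + 1)).
    pose proof (tdist_triangle (s m i) (s N i) (s n i)) as Htri.
    rewrite (tdistC (s m i) (s N i)) in Htri.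
    pose proof (half_pow_le k0 (kk N) ltac:(pose proof (strict_mono_ge_id kk Hk N); lia)).
    rewrite (Nat.add_1_r (kk N)), half_powS in *; lra. }
  destruct (choice _ Hlim) as [L HL]; exists L; intros j i Hi.
  pose proof (half_pow_gt0 (kk j + 1)) as Hr.
  destruct (HL i _ Hr) as [N HN]; specialize (HN (max j N) ltac:(lia)).
  pose proof (Inv i j (max j N) Hi ltac:(lia)); pose proof (half_pow_gt0 (kk (max j N) + 1)).
  pose proof (tdist_triangle (s j i) (s (max j N) i) (L i)).
  rewrite (Nat.add_1_r (kk j)), half_powS in *; lra.
Qed.

Lemma TN_baire U : TN_open U -> (exists x, U x) -> ~ meager TN_open U.
Proof.
  apply (baire_from_balls TN TN_open TN_ball).
  - intros U' HU x Ux; apply TN_open_balls, HU, Ux.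
  - intros U' H x Ux; destruct (H x Ux) as [k Hk].
    exists k, (half_pow k); split; [apply half_pow_gt0 | exact Hk].
  - intros x k; apply cyl_center, half_pow_gt0.
  - intros x k y Hy; apply TN_open_balls, (cyl_open x k (half_pow k) y Hy).
  - exact TN_ball_antitone.
  - exact TN_ball_complete.
Qed.

Definition TN_group : BaireAbGroup :=
  {| bg_topology := TN_topology; bg_mulC := TNmulC; bg_mulA := TNmulA; bg_mul1 := TNmul1;
     bg_mulV := TNmulV; bg_open_translate := TN_open_translate; bg_baire := TN_baire |}.

(** * Countable covers of T^N by small boxes *)

Fixpoint decode (n i : nat) : nat :=
  match i with 0%nat => fst (of_nat n) | S i' => decode (snd (of_nat n)) i' end.

Lemma decode_onto m (f : nat -> nat) : exists n, forall i, (i <= m)%nat -> decode n i = f i.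
Proof.
  revert f; induction m as [|m IH]; intros f.
  - exists (to_nat (f 0%nat, 0%nat)); intros i Hi; replace i with 0%nat by lia.
    cbn [decode]; rewrite cancel_of_to; reflexivity.
  - destruct (IH (fun i => f (S i))) as [n Hn]; exists (to_nat (f 0%nat, n)).
    intros [|i] Hi; cbn [decode]; rewrite cancel_of_to; [reflexivity | apply Hn; lia].
Qed.

(* Grid points of mesh [r], offset by [r/2] so that every [a >= -1] is strictly within [r] of one. *)
Definition grid (r : R) (j : nat) : R := -2 + INR j * r - r / 2.

Lemma grid_cover r a : 0 < r -> -1 <= a -> exists j, Rabs (a - grid r j) < r.
Proof.
  intros Hr Ha; destruct (archimed ((a + 2) / r)) as [Hup1 Hup2].
  assert (Hpos : (0 < up ((a + 2) / r))%Z).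
  { apply lt_IZR; assert (0 < (a + 2) / r) by (apply Rdiv_lt_0_compat; lra); lra. }
  exists (Z.to_nat (up ((a + 2) / r))); unfold grid.
  rewrite INR_IZR_INZ, Z2Nat.id by lia; set (u := IZR (up ((a + 2) / r))) in *.
  assert (E : (a + 2) / r * r = a + 2) by (field; lra).
  assert (u * r > a + 2) by (rewrite <- E; apply Rmult_gt_compat_r; lra).
  assert (u * r - (a + 2) <= r).
  { rewrite <- E; replace (u * r - (a + 2) / r * r) with ((u - (a + 2) / r) * r) by ring.
    pose proof (Rmult_le_compat_r r _ _ (Rlt_le _ _ Hr) Hup2); lra. }
  apply Rabs_def1; lra.
Qed.

(* [k] encodes, through [decode] and [of_nat], a pair of grid indices for each coordinate [<= m]. *)
Definition box (m : nat) (r : R) (k : nat) (y : TN) : Prop :=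
  forall i, (i <= m)%nat ->
    Rabs (tre (y i) - grid r (fst (of_nat (decode k i)))) < r /\
    Rabs (tim (y i) - grid r (snd (of_nat (decode k i)))) < r.

Lemma box_open m r k : TN_open (box m r k).
Proof.
  unfold box; intros y Hy.
  set (a i := grid r (fst (of_nat (decode k i)))); set (b i := grid r (snd (of_nat (decode k i)))).
  destruct (finite_margin (fun i => Rmax (Rabs (tre (y i) - a i)) (Rabs (tim (y i) - b i))) r m)
    as [e [He Hm]]; [intros i Hi; apply Rmax_lub_lt; apply Hy; auto|].
  exists m, e; split; auto; intros z Hz i Hi; specialize (Hm i Hi); specialize (Hz i Hi).
  pose proof (Rmax_l (Rabs (tre (y i) - a i)) (Rabs (tim (y i) - b i))).
  pose proof (Rmax_r (Rabs (tre (y i) - a i)) (Rabs (tim (y i) - b i))).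
  pose proof (tdist_tre_le (y i) (z i)); pose proof (tdist_tim_le (y i) (z i)).
  pose proof (R_dist_tri (tre (z i)) (a i) (tre (y i))) as Hre.
  pose proof (R_dist_tri (tim (z i)) (b i) (tim (y i))) as Him.
  unfold R_dist in Hre, Him.
  rewrite (Rabs_minus_sym (tre (z i)) (tre (y i))) in Hre.
  rewrite (Rabs_minus_sym (tim (z i)) (tim (y i))) in Him.
  unfold a, b in *; split; lra.
Qed.

Lemma box_cover m r y : 0 < r -> exists k, box m r k y.
Proof.
  intros Hr.
  assert (Hcell : forall i, exists p : nat * nat,
    Rabs (tre (y i) - grid r (fst p)) < r /\ Rabs (tim (y i) - grid r (snd p)) < r).
  { intros i; destruct (grid_cover r (tre (y i)) Hr (tre_ge_m1 _)) as [a Ha].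
    destruct (grid_cover r (tim (y i)) Hr (tim_ge_m1 _)) as [b Hb]; exists (a, b); auto. }
  destruct (choice _ Hcell) as [p Hp]; destruct (decode_onto m (fun i => to_nat (p i))) as [k Hk].
  exists k; intros i Hi; rewrite Hk, cancel_of_to by exact Hi; apply Hp.
Qed.

Lemma box_diam m r k y z i : box m r k y -> box m r k z -> (i <= m)%nat -> tdist (y i) (z i) < 4 * r.
Proof.
  intros Hy Hz Hi; destruct (Hy i Hi) as [Hy1 Hy2], (Hz i Hi) as [Hz1 Hz2].
  pose proof (tdist_le_tre_tim (y i) (z i)).
  pose proof (R_dist_tri (tre (y i)) (tre (z i)) (grid r (fst (of_nat (decode k i))))) as Hre.
  pose proof (R_dist_tri (tim (y i)) (tim (z i)) (grid r (snd (of_nat (decode k i))))) as Him.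
  unfold R_dist in Hre, Him.
  rewrite (Rabs_minus_sym (grid r _)) in Hre; rewrite (Rabs_minus_sym (grid r _)) in Him; lra.
Qed.

(** * The Polish group G and its translation action *)

Section PolishSubgroup.
Variable G : TN -> Prop.
Hypothesis HG : subgroup G.

Definition gmul (g h : Gsub G) : Gsub G :=
  exist _ (TNmul (proj1_sig g) (proj1_sig h)) (proj1 (proj2 HG) _ _ (proj2_sig g) (proj2_sig h)).
Definition ginv (g : Gsub G) : Gsub G :=
  exist _ (TNinv (proj1_sig g)) (proj2 (proj2 HG) _ (proj2_sig g)).
Definition gone : Gsub G := exist _ TNone (proj1 HG).

Lemma Gsub_eq (g h : Gsub G) : proj1_sig g = proj1_sig h -> g = h.
Proof. destruct g, h; simpl; intros ->; f_equal; apply proof_irrelevance. Qed.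

Lemma gmulC g h : gmul g h = gmul h g. Proof. apply Gsub_eq, TNmulC. Qed.
Lemma gmulA g h k : gmul g (gmul h k) = gmul (gmul g h) k. Proof. apply Gsub_eq, TNmulA. Qed.
Lemma gmul1 g : gmul gone g = g. Proof. apply Gsub_eq, TNmul1. Qed.
Lemma gmulV g : gmul g (ginv g) = gone. Proof. apply Gsub_eq, TNmulV. Qed.

Variable tau : (Gsub G -> Prop) -> Prop.
Hypothesis Htau : compatible_polish_group_topology G tau.

Lemma tau_topology : is_topology tau.
Proof. exact (proj1 (proj1 Htau)). Qed.

Lemma tau_group : group_topology G tau.
Proof. exact (proj1 (proj2 Htau)). Qed.

Lemma tau_baire U : tau U -> (exists g, U g) -> ~ meager tau U.
Proof.
  destruct Htau as [[_ [_ [d [Hd [Hc Ho]]]]] _]; apply (metric_baire tau d); auto.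
Qed.

Lemma tau_open_inv W : tau W -> tau (fun g => W (ginv g)).
Proof.
  intros OW; apply open_of_local; [apply tau_topology|]; intros g Wg.
  destruct (tau_group W gone g (ginv g) OW) as [U [V [_ [OV [U1 [Vg H]]]]]];
    [simpl; rewrite TNmul1; reflexivity | exact Wg|].
  exists V; repeat split; auto; intros h Vh.
  apply (H gone h); auto; simpl; rewrite TNmul1; reflexivity.
Qed.

Lemma tau_open_translate a W : tau W -> tau (fun g => W (gmul a g)).
Proof.
  intros OW; apply open_of_local; [apply tau_topology|]; intros g Wg.
  destruct (tau_group W a (ginv g) (gmul a g) OW) as [U [V [_ [OV [Ua [Vg H]]]]]];
    [simpl; rewrite TNinvK; reflexivity | exact Wg|].
  exists (fun h => V (ginv h)); repeat split; [apply tau_open_inv, OV | exact Vg|].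
  intros h Vh; apply (H a (ginv h)); auto; simpl; rewrite TNinvK; reflexivity.
Qed.

Definition G_group : BaireAbGroup :=
  {| bg_topology := tau_topology; bg_mulC := gmulC; bg_mulA := gmulA; bg_mul1 := gmul1;
     bg_mulV := gmulV; bg_open_translate := tau_open_translate; bg_baire := tau_baire |}.

Hypothesis G_borel : borel TN_open G.

(* Automatic continuity: some box [A_k] of [G] is non-meager in [tau], and Pettis' lemma puts a
   [tau]-neighbourhood of [1] inside [A_k A_k^-1], whose elements are close to [1]. *)
Lemma inclusion_continuous_at_1 m d : 0 < d ->
  exists W, tau W /\ W gone /\ forall w, W w -> cyl TNone m d (proj1_sig w).
Proof.
  intros Hd; set (r := d / 4); assert (Hr : 0 < r) by (unfold r; lra).
  set (A k (g : Gsub G) := box m r k (proj1_sig g)).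
  assert (HA : forall k, baire_property tau (A k)).
  { intros k; apply borel_baire_property; [apply tau_topology|]; apply (proj2 (proj2 Htau)).
    apply (borel_ext _ _ (fun x => G x /\ box m r k x)).
    - intros x; split; [intros [Gx Bx]; exists (exist _ x Gx); auto|].
      intros [g [<- Ag]]; split; [apply proj2_sig | exact Ag].
    - apply borel_inter; [exact G_borel | apply borel_open, box_open]. }
  assert (Hk : exists k, ~ meager tau (A k)).
  { apply NNPP; intros Hn; apply (tau_baire (fun _ => True));
      [apply open_full, tau_topology | exists gone; exact I|].
    apply (meagerS _ _ _ (fun g => exists k, A k g)).
    - intros g _; apply (box_cover m r (proj1_sig g) Hr).
    - apply meager_countable_union; intros k; apply NNPP; intros Hm; apply Hn; eauto. }
  destruct Hk as [k Hk]; destruct (pettis G_group (A k) (HA k) Hk) as [W [OW [W1 HW]]].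
  exists W; repeat split; auto; intros w Ww i Hi.
  destruct (HW w Ww) as [a [b [Aa [Ab ->]]]]; simpl; unfold TNmul, TNinv.
  rewrite tdistC, tdist_div1; pose proof (box_diam m r k _ _ i Aa Ab Hi); unfold r in *; lra.
Qed.

Lemma action_continuous_translation : action_continuous G tau.
Proof.
  intros W g x OW Wgx; destruct (OW _ Wgx) as [n [e [He H]]].
  destruct (inclusion_continuous_at_1 n (e / 2) ltac:(lra)) as [W0 [OW0 [W01 HW0]]].
  exists (fun g' => W0 (gmul (ginv g) g')), (cyl x n (e / 2)).
  split; [apply tau_open_translate, OW0|]; split; [apply cyl_open|].
  split; [rewrite gmulC, gmulV; exact W01|]; split; [apply cyl_center; lra|].
  intros g' x' Hg' Hx'; apply H; intros i Hi; unfold act, TNmul.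
  eapply Rle_lt_trans; [apply tdist_mul_le|].
  specialize (HW0 _ Hg' i Hi); specialize (Hx' i Hi); simpl in HW0; unfold TNmul, TNinv in HW0.
  change (TNone i) with tone in HW0; rewrite tdistC, tmulC, tdist_div1, tdistC in HW0; lra.
Qed.

End PolishSubgroup.

Lemma orbit_dense G (HD : strongly_dense G) x : dense TN_open (@orbit G x).
Proof.
  intros y U OU Uy; destruct (OU y Uy) as [n [e [He H]]].
  destruct (HD n (fun i => tmul (y i) (tinv (x i)))) as [g [Gg Hg]].
  exists (act (exist _ g Gg : Gsub G) x); split; [|exists (exist _ g Gg); reflexivity].
  apply H; intros i Hi; unfold act, TNmul; simpl; rewrite Hg, tmulVK, tdist_xx by exact Hi; exact He.
Qed.

Lemma proper_subgroup_meager G : subgroup G -> proper_subgroup G -> borel TN_open G ->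
  strongly_dense G -> meager TN_open G.
Proof.
  intros [_ [Gmul Ginv]] [z nz] HB HD; apply NNPP; intros Hm.
  destruct (pettis TN_group G (borel_baire_property _ _ TN_topology G HB) Hm) as [W [OW [W1 HW]]].
  simpl in *; destruct (OW TNone W1) as [n [e [He H]]].
  destruct (HD n z) as [h [Gh Hh]].
  assert (Wz : W (TNmul (TNinv h) z)).
  { apply H; intros i Hi; unfold TNmul, TNinv, TNone.
    rewrite Hh, tmulVl, tdist_xx by exact Hi; exact He. }
  destruct (HW _ Wz) as [a [b [Ga [Gb E]]]]; apply nz.
  replace z with (TNmul h (TNmul a (TNinv b))) by (rewrite <- E, TNmulA, TNmulV, TNmul1; reflexivity).
  auto.
Qed.

Lemma orbit_meager G : subgroup G -> proper_subgroup G -> borel TN_open G ->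
  strongly_dense G -> forall x, meager TN_open (@orbit G x).
Proof.
  intros HG HP HB HD x; apply (meagerS _ _ _ (fun y => G (TNmul (TNinv x) y))).
  - intros y [g ->]; unfold act.
    rewrite (TNmulC (proj1_sig g) x), TNmulA, (TNmulC (TNinv x)), TNmulV, TNmul1; apply proj2_sig.
  - exact (translate_meager TN_group G (TNinv x) (proper_subgroup_meager G HG HP HB HD)).
Qed.

(** * Roots in the circle group *)

Fixpoint tpow (a : Tpt) (r : nat) : Tpt :=
  match r with 0%nat => tone | S r' => tmul a (tpow a r') end.

Lemma tpow_dist a b r : tdist (tpow a r) (tpow b r) <= INR r * tdist a b.
Proof.
  induction r as [|r IH]; simpl tpow; [rewrite tdist_xx; simpl; lra|].
  eapply Rle_trans; [apply tdist_mul_le|]; rewrite S_INR; lra.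
Qed.

Lemma tpow1 r : tpow tone r = tone.
Proof. induction r as [|r IH]; simpl; [|rewrite IH, tmul1l]; reflexivity. Qed.

Lemma tpow_double a p : tpow a (2 * p) = tpow (tmul a a) p.
Proof.
  induction p as [|p IH]; [reflexivity|].
  replace (2 * S p)%nat with (S (S (2 * p))) by lia; cbn [tpow]; rewrite IH, tmulA; reflexivity.
Qed.

(* The square root with nonnegative real part, by the half-angle formulas. *)
Definition tsqrt_re (z : Tpt) : R := sqrt ((1 + tre z) / 2).
Definition tsqrt_im (z : Tpt) : R :=
  if Rlt_dec (tim z) 0 then - sqrt ((1 - tre z) / 2) else sqrt ((1 - tre z) / 2).

Lemma tsqrt_re_sqr z : tsqrt_re z * tsqrt_re z = (1 + tre z) / 2.
Proof. pose proof (tnorm1 z); apply sqrt_sqrt; nra. Qed.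

Lemma tsqrt_im_sqr z : tsqrt_im z * tsqrt_im z = (1 - tre z) / 2.
Proof.
  pose proof (tnorm1 z); unfold tsqrt_im; destruct (Rlt_dec (tim z) 0);
    rewrite ?Rmult_opp_opp; apply sqrt_sqrt; nra.
Qed.

Lemma tsqrt_ok z :
  fst (tsqrt_re z, tsqrt_im z) * fst (tsqrt_re z, tsqrt_im z) +
  snd (tsqrt_re z, tsqrt_im z) * snd (tsqrt_re z, tsqrt_im z) = 1.
Proof. simpl; rewrite tsqrt_re_sqr, tsqrt_im_sqr; lra. Qed.

Definition tsqrt (z : Tpt) : Tpt := exist _ (tsqrt_re z, tsqrt_im z) (tsqrt_ok z).

Lemma tsqrt_sqr z : tmul (tsqrt z) (tsqrt z) = z.
Proof.
  pose proof (tnorm1 z).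
  assert (E : sqrt ((1 + tre z) / 2) * sqrt ((1 - tre z) / 2) = Rabs (tim z / 2)).
  { rewrite <- sqrt_mult by nra.
    replace ((1 + tre z) / 2 * ((1 - tre z) / 2)) with (Rsqr (tim z / 2)) by (unfold Rsqr; nra).
    apply sqrt_Rsqr_abs. }
  apply Tpt_eq; tsimp;
    change (tre (tsqrt z)) with (tsqrt_re z); change (tim (tsqrt z)) with (tsqrt_im z).
  - rewrite tsqrt_re_sqr, tsqrt_im_sqr; lra.
  - unfold tsqrt_re, tsqrt_im in *; destruct (Rlt_dec (tim z) 0).
    + rewrite Rabs_left in E by lra; nra.
    + rewrite Rabs_right in E by lra; nra.
Qed.

Lemma tsqrt_dist2 z : tdist2 (tsqrt z) tone <= tdist2 z tone / 2.
Proof.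
  pose proof (tnorm1 z); pose proof (tre_ge_m1 z); unfold tdist2; tsimp.
  change (tre (tsqrt z)) with (tsqrt_re z); change (tim (tsqrt z)) with (tsqrt_im z).
  assert (Hle : (1 + tre z) / 2 <= tsqrt_re z).
  { pose proof (tsqrt_re_sqr z); assert (0 <= tsqrt_re z) by apply sqrt_pos.
    assert (tsqrt_re z <= 1) by (apply le_of_sqr_le; nra). nra. }
  pose proof (tsqrt_re_sqr z); pose proof (tsqrt_im_sqr z); nra.
Qed.

Fixpoint tsqrt_iter (K : nat) (z : Tpt) : Tpt :=
  match K with 0%nat => z | S K' => tsqrt (tsqrt_iter K' z) end.

Lemma tsqrt_iter_pow K z : tpow (tsqrt_iter K z) (2 ^ K) = z.
Proof.
  induction K as [|K IH]; [apply tmul1r|].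
  change (2 ^ S K)%nat with (2 * 2 ^ K)%nat; cbn [tsqrt_iter].
  rewrite tpow_double, tsqrt_sqr; exact IH.
Qed.

Lemma tsqrt_iter_dist2 K z : tdist2 (tsqrt_iter K z) tone <= 4 * half_pow K.
Proof.
  induction K as [|K IH]; cbn [tsqrt_iter].
  - pose proof (tnorm1 z); pose proof (tre_ge_m1 z); unfold half_pow, tdist2; tsimp; simpl; nra.
  - pose proof (tsqrt_dist2 (tsqrt_iter K z)); rewrite half_powS; lra.
Qed.

Lemma troot rho : 0 < rho ->
  exists M, (1 <= M)%nat /\ forall t, exists w, tpow w M = t /\ tdist w tone < rho.
Proof.
  intros Hr; destruct (half_pow_lt (rho * rho / 4) ltac:(nra)) as [K HK].
  exists (2 ^ K)%nat; split; [pose proof (Nat.pow_nonzero 2 K); lia|].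
  intros t; exists (tsqrt_iter K t); split; [apply tsqrt_iter_pow|].
  pose proof (tsqrt_iter_dist2 K t); rewrite <- tdist_sqr in *.
  pose proof (tdist_ge0 (tsqrt_iter K t) tone); apply NNPP; intros Hc; nra.
Qed.

(** * Local orbits *)

Section LocalOrbits.
Variable G : TN -> Prop.
Hypothesis HG : subgroup G.
Hypothesis HD : strongly_dense G.
Variable tau : (Gsub G -> Prop) -> Prop.
Hypothesis Htau : compatible_polish_group_topology G tau.

Local Notation gmul := (gmul G HG).
Local Notation ginv := (ginv G HG).
Local Notation gone := (gone G HG).

Lemma neighbourhood_translates_cover (V1 : Gsub G -> Prop) (s : nat -> Gsub G) m :
  tau V1 -> V1 gone -> (forall U, tau U -> (exists g, U g) -> exists k, U (s k)) ->
  forall y, exists k g, V1 g /\ forall i, (i <= m)%nat -> y i = proj1_sig (gmul g (s k)) i.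
Proof.
  intros OV1 V11 Hs y; destruct (HD m y) as [h [Gh Hh]]; set (hh := exist _ h Gh : Gsub G).
  destruct (Hs (fun t => V1 (gmul hh (ginv t)))) as [k Hk].
  - apply (tau_open_inv G HG tau Htau (fun u => V1 (gmul hh u))), tau_open_translate, OV1; exact Htau.
  - exists hh; rewrite gmulV; exact V11.
  - exists k, (gmul hh (ginv (s k))); split; auto; intros i Hi; simpl; unfold TNmul, TNinv.
    rewrite tmulVK; symmetry; apply Hh, Hi.
Qed.

(* [T^N] is covered by the countably many sets [V1 s_k] (restricted to coordinates [<= m]), so by
   Baire one of them is dense in an open set [Q]; comparing with a point [g0 s_k] of [Q] shows that
   the quotients [g g0^-1] are dense near [1]. *)
Lemma quotients_dense_near_1 (V1 : Gsub G -> Prop) m : tau V1 -> V1 gone ->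
  exists d, 0 < d /\ forall y, cyl TNone m d y -> forall eta, 0 < eta ->
    exists g g0, V1 g /\ V1 g0 /\ cyl y m eta (proj1_sig (gmul g (ginv g0))).
Proof.
  intros OV1 V11.
  destruct Htau as [[_ [[Hempty | [s Hs]] _]] _]; [destruct (Hempty gone)|].
  set (B k (y : TN) := exists g, V1 g /\ forall i, (i <= m)%nat -> y i = proj1_sig (gmul g (s k)) i).
  assert (Hk : exists k, ~ nowhere_dense TN_open (closure TN_open (B k))).
  { apply NNPP; intros Hn.
    apply (TN_baire (fun _ => True) (open_full _ _ TN_topology) (ex_intro _ TNone I)).
    exists (fun k => closure TN_open (B k)); split; [intros k; apply NNPP; intros Hc; eauto|].
    intros y _; destruct (neighbourhood_translates_cover V1 s m OV1 V11 Hs y) as [k Hk].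
    exists k; apply subset_closure, Hk. }
  destruct Hk as [k Hk]; apply not_all_ex_not in Hk as [y0 Hy0]; apply NNPP in Hy0.
  destruct Hy0 as [Q [OQ [Qy0 HQ]]].
  destruct (closure_idem _ _ _ _ (HQ y0 Qy0) Q OQ Qy0) as [b [Qb [g0 [Vg0 Hb]]]].
  destruct (OQ b Qb) as [n' [d [Hd HQb]]].
  exists d; split; auto; intros y Hy eta Heta.
  set (p i := if Nat.leb i m then tmul (b i) (y i) else b i).
  assert (Qp : Q p).
  { apply HQb; intros i Hi; unfold p; destruct (Nat.leb i m) eqn:E; [|rewrite tdist_xx; exact Hd].
    apply Nat.leb_le in E; rewrite <- (tmul1r (b i)) at 1; rewrite tdist_mull; apply Hy, E. }
  destruct (closure_idem _ _ _ _ (HQ p Qp) (cyl p m eta) (cyl_open p m eta) (cyl_center p m eta Heta))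
    as [q [Hq [g [Vg Hqg]]]].
  exists g, g0; repeat split; auto; intros i Hi.
  specialize (Hq i Hi); specialize (Hqg i Hi); specialize (Hb i Hi).
  unfold p in Hq; rewrite (proj2 (Nat.leb_le i m) Hi), Hb, Hqg in Hq; simpl; unfold TNmul, TNinv.
  set (a := proj1_sig g0 i) in *; set (c := proj1_sig (s k) i) in *; set (e := proj1_sig g i) in *.
  rewrite <- (tdist_mulr (tmul a c) (y i)), (tmulC (y i)).
  replace (tmul (tmul e (tinv a)) (tmul a c)) with (tmul e c); [exact Hq|].
  rewrite <- tmulA, (tmulA (tinv a)), tmulVl, tmul1l; reflexivity.
Qed.

Lemma iter_actE (h : Gsub G) x r i : Nat.iter r (@act G h) x i = tmul (tpow (proj1_sig h i) r) (x i).
Proof.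
  induction r as [|r IH]; simpl; [rewrite tmul1l; reflexivity|].
  unfold act at 1, TNmul at 1; rewrite IH, tmulA; reflexivity.
Qed.

Lemma lchain_iter U V x x1 (h : Gsub G) M : lchain U V x x1 -> V h ->
  (forall r, (r <= M)%nat -> U (Nat.iter r (@act G h) x1)) ->
  forall r, (r <= M)%nat -> lchain U V x (Nat.iter r (@act G h) x1).
Proof.
  intros C1 Vh HU; induction r as [|r IH]; intros Hr; [exact C1|].
  apply lchainS; [apply IH; lia | exact Vh | apply (HU (S r) Hr)].
Qed.

(* Take [h] close to the element equal to [1] on coordinates [<= n] and to an [M]-th root of
   [z/x1] on coordinates in [(n, m]]: the first [M] iterates of [h] barely move coordinates
   [<= n] and bring coordinates in [(n, m]] close to [z]. *)
Lemma approach_tail (V1 V : Gsub G -> Prop) (x1 z : TN) (n m : nat) eta :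
  tau V1 -> V1 gone -> (forall g g0, V1 g -> V1 g0 -> V (gmul g (ginv g0))) ->
  (n <= m)%nat -> 0 < eta -> exists h M, V h /\ (1 <= M)%nat /\
    (forall r, (r <= M)%nat -> cyl x1 n eta (Nat.iter r (@act G h) x1)) /\
    (forall i, (n < i <= m)%nat -> tdist (z i) (Nat.iter M (@act G h) x1 i) < eta).
Proof.
  intros OV1 V11 HV Hnm Heta.
  destruct (quotients_dense_near_1 V1 m OV1 V11) as [d [Hd Happrox]].
  destruct (troot d Hd) as [M [HM Hroot]].
  destruct (choice _ (fun i => Hroot (tmul (z i) (tinv (x1 i))))) as [w Hw].
  set (y i := if Nat.leb i n then tone else w i).
  assert (HMpos : 0 < INR M + 1) by (pose proof (pos_INR M); lra).
  set (th := eta / (INR M + 1)).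
  assert (Hth : 0 < th) by (apply Rdiv_lt_0_compat; lra).
  assert (HMth : INR M * th < eta).
  { unfold th; apply (Rmult_lt_reg_r (INR M + 1)); auto.
    replace (INR M * (eta / (INR M + 1)) * (INR M + 1)) with (INR M * eta) by (field; lra); nra. }
  destruct (Happrox y) with (eta := th) as [g [g0 [Vg [Vg0 Hh]]]]; [|exact Hth|].
  { intros i Hi; unfold y; destruct (Nat.leb i n); [rewrite tdist_xx; exact Hd|].
    rewrite tdistC; apply Hw. }
  exists (gmul g (ginv g0)), M; repeat split; auto; set (h := gmul g (ginv g0)) in *.
  - intros r Hr i Hi; rewrite iter_actE, <- (tmul1l (x1 i)) at 1; rewrite tdist_mulr, <- (tpow1 r).
    eapply Rle_lt_trans; [apply tpow_dist|].
    specialize (Hh i ltac:(lia)); unfold y in Hh; rewrite (proj2 (Nat.leb_le i n) Hi) in Hh.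
    pose proof (le_INR r M Hr).
    assert (INR r * tdist tone (proj1_sig h i) <= INR M * th)
      by (apply Rmult_le_compat; [apply pos_INR | apply tdist_ge0 | lra | lra]).
    lra.
  - intros i [Hni Him]; rewrite iter_actE, <- (tmulVK (z i) (x1 i)), <- (proj1 (Hw i)), tdist_mulr.
    eapply Rle_lt_trans; [apply tpow_dist|].
    specialize (Hh i Him); unfold y in Hh; rewrite (proj2 (Nat.leb_gt i n) Hni) in Hh.
    assert (INR M * tdist (w i) (proj1_sig h i) <= INR M * th)
      by (apply Rmult_le_compat_l; [apply pos_INR | lra]).
    lra.
Qed.

Lemma quotient_nbhd_1 V : tau V -> V gone ->
  exists W, tau W /\ W gone /\ forall g g0, W g -> W g0 -> V (gmul g (ginv g0)).
Proof.
  intros OV V1.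
  destruct (tau_group G tau Htau V gone gone gone OV) as [U' [V' [OU' [OV' [U'1 [V'1 HUV]]]]]];
    [simpl; rewrite TNinv1, TNmul1; reflexivity | exact V1 |].
  exists (fun g => U' g /\ V' g); repeat split; auto.
  - apply open_inter; [apply (tau_topology G tau Htau) | exact OU' | exact OV'].
  - intros g g0 [Ug _] [_ Vg0]; apply (HUV g g0); auto.
Qed.

Lemma approach_head (V1 V : Gsub G -> Prop) x n :
  tau V1 -> V1 gone -> (forall g g0, V1 g -> V1 g0 -> V (gmul g (ginv g0))) ->
  exists d, 0 < d /\ forall z, cyl x n d z -> forall eta, 0 < eta ->
    exists h, V h /\ cyl z n eta (act h x).
Proof.
  intros OV1 V11 HV; destruct (quotients_dense_near_1 V1 n OV1 V11) as [d [Hd Happrox]].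
  exists d; split; auto; intros z Hz eta Heta.
  destruct (Happrox (fun i => tmul (z i) (tinv (x i)))) with (eta := eta) as [g [g0 [Vg [Vg0 Hg]]]];
    [|exact Heta|].
  { intros i Hi; change (TNone i) with tone; rewrite tdistC, tdist_div1, tdistC; apply Hz, Hi. }
  exists (gmul g (ginv g0)); split; [apply HV; auto|].
  intros i Hi; unfold act, TNmul; rewrite <- (tmulVK (z i) (x i)), tdist_mulr; apply Hg, Hi.
Qed.

Lemma local_orbit_closure_interior U V x : TN_open U -> symmetric_open_nbhd_id G tau V -> U x ->
  exists y, Defs.interior TN_open (closure TN_open (local_orbit x U V)) y.
Proof.
  intros HU [OV [V1 _]] Ux; destruct (HU x Ux) as [n [eps [Heps HUx]]].
  destruct (quotient_nbhd_1 V OV (V1 gone eq_refl)) as [W [OW [W1 HW]]].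
  destruct (approach_head W V x n OW W1 HW) as [dn [Hdn Hhead]].
  pose proof (Rmin_l dn (eps / 2)); pose proof (Rmin_r dn (eps / 2)); set (d := Rmin dn (eps / 2)) in *.
  exists x, (cyl x n d); split; [apply cyl_open|]; split; [apply cyl_center, Rmin_glb_lt; lra|].
  intros z Hz R OR Rz; destruct (OR z Rz) as [m0 [e0 [He0 HR]]].
  pose proof (Rmin_l e0 (eps / 4)); pose proof (Rmin_r e0 (eps / 4)).
  set (eta := Rmin e0 (eps / 4)) in *.
  assert (Heta : 0 < eta) by (apply Rmin_glb_lt; lra).
  destruct (Hhead z) with (eta := eta / 2) as [h0 [Vh0 Hx1z]];
    [intros i Hi; specialize (Hz i Hi); lra | lra |].
  set (x1 := act h0 x) in *.
  assert (Hx1x : forall i, (i <= n)%nat -> tdist (x i) (x1 i) < eps / 2 + eta / 2).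
  { intros i Hi; pose proof (tdist_triangle (x i) (z i) (x1 i)); specialize (Hz i Hi).
    specialize (Hx1z i Hi); lra. }
  assert (C1 : lchain U V x x1).
  { apply lchainS; [apply lchain0, Ux | exact Vh0 |].
    apply (HUx x1); intros i Hi; specialize (Hx1x i Hi); lra. }
  destruct (approach_tail W V x1 z n (max m0 n) (eta / 2) OW W1 HW ltac:(lia) ltac:(lra))
    as [h [M [Vh [HM [Hstay Htail]]]]].
  assert (UIt : forall r, (r <= M)%nat -> U (Nat.iter r (@act G h) x1)).
  { intros r Hr; apply HUx; intros i Hi; specialize (Hstay r Hr i Hi); specialize (Hx1x i Hi).
    pose proof (tdist_triangle (x i) (x1 i) (Nat.iter r (@act G h) x1 i)); lra. }
  destruct M as [|M]; [lia|].
  exists (Nat.iter (S M) (@act G h) x1); split.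
  - apply HR; intros i Hi; destruct (Nat.le_gt_cases i n) as [Hin|Hin].
    + specialize (Hstay (S M) (le_n _) i Hin); specialize (Hx1z i Hin).
      pose proof (tdist_triangle (z i) (x1 i) (Nat.iter (S M) (@act G h) x1 i)); lra.
    + specialize (Htail i ltac:(lia)); lra.
  - exists (Nat.iter M (@act G h) x1), h; repeat split; auto.
    + apply (lchain_iter U V x x1 h (S M)); auto.
    + apply (UIt (S M)); auto.
Qed.

End LocalOrbits.

Theorem mainTheorem1 (G : TN -> Prop) :
  subgroup G -> proper_subgroup G -> polishable G -> strongly_dense G ->
  forall tau : (Gsub G -> Prop) -> Prop,
    compatible_polish_group_topology G tau -> turbulent G tau.
Proof.
  intros HG HP [HB _] HD tau Htau; repeat split.
  - exact (action_continuous_translation G HG tau Htau HB).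
  - exact (orbit_dense G HD).
  - exact (orbit_meager G HG HP HB HD).
  - exact (local_orbit_closure_interior G HG HD tau Htau).
Qed.
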